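(* Let $\phi$ be a topological flow on a compact metric space $(M,\mathrm{dist})$, let $K\subset M\setminus\mathrm{Sing}(\phi)$ be compact, let $T_0\in(0,1)$ satisfy $\phi(t,x)\neq x$ for all $t\in(0,2T_0]$ and $x\in K$, and let $\tilde K=\bigcap_{t\in[-2T_0,2T_0]}\phi(t,K)$. Then for every $\varepsilon>0$ there exists $\varepsilon_1>0$ with the following property: if $\xi\in\mathcal{P}$, $t_0\in\mathbb{R}$, $T_1\ge T_0$, $g\in\mathrm{Rep}$ with $g(0)=0$, and $y\in M$ satisfy $\mathrm{dist}(\xi(t+t_0),\phi(g(t),y))<\varepsilon_1$ and $\xi(t+t_0),\ \phi(g(t),y)\in\tilde K$ for all $t\in[0,T_1]$, then there exists $\tilde g\in\mathrm{Rep}(\varepsilon)$ with $\tilde g(0)=g(0)$ and $\tilde g(T_1)=g(T_1)$ such that $\mathrm{dist}(\xi(t+t_0),\phi(\tilde g(t),y))<\varepsilon$ for all $t\in[0,T_1]$.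
   Context: A topological flow is a continuous $\phi:\mathbb{R}\times M\to M$ with $\phi(0,x)=x$, $\phi(s+t,x)=\phi(s,\phi(t,x))$; $\mathrm{Sing}(\phi)$ is its set of fixed points. $\mathcal{P}$ denotes the set of all functions $\xi:\mathbb{R}\to M$ with $\xi(t+nT_0)=\phi(t,\xi(nT_0))$ for all $t\in[0,T_0)$ and $n\in\mathbb{Z}$. $\mathrm{Rep}$ is the set of orientation-preserving homeomorphisms of $\mathbb{R}$, and $\mathrm{Rep}(\varepsilon)=\{f\in\mathrm{Rep}: |\frac{f(a)-f(b)}{a-b}-1|<\varepsilon\ \forall a>b\}$. *)

From HB Require Import structures.
From mathcomp Require Import all_boot all_order all_algebra.
From mathcomp Require Import all_classical all_reals all_analysis.
Set Implicit Arguments. Unset Strict Implicit. Unset Printing Implicit Defensive.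
Import Order.TTheory GRing.Theory Num.Theory.
Import numFieldTopology.Exports.
Local Open Scope classical_set_scope.
Local Open Scope ring_scope.

Definition is_flow {R : realType} {M : metricType R} (phi : R -> M -> M) : Prop :=
  continuous (fun p : R * M => phi p.1 p.2) /\
  (forall x, phi 0 x = x) /\
  (forall s t x, phi (s + t) x = phi s (phi t x)).

Definition Sing {R : realType} {M : metricType R} (phi : R -> M -> M) : set M :=
  [set x | forall t, phi t x = x].

Definition in_P {R : realType} {M : metricType R} (phi : R -> M -> M) (T0 : R)
  (xi : R -> M) : Prop :=
  forall (n : int) (t : R), 0 <= t -> t < T0 ->
    xi (t + n%:~R * T0) = phi t (xi (n%:~R * T0)).

Definition is_Rep {R : realType} (f : R -> R) : Prop :=
  (exists h : R -> R, cancel f h /\ cancel h f /\ continuous f /\ continuous h) /\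
  (forall a b, a < b -> f a < f b).

Definition is_Rep_eps {R : realType} (eps : R) (f : R -> R) : Prop :=
  is_Rep f /\ (forall a b, b < a -> `|(f a - f b) / (a - b) - 1| < eps).

(* Since [K] is compact and has no point of period in (0, 2 T0], the time-[dl] map moves
   every point of [K] by at least some [c > 0].  On a window of length at most [T0] on
   which [xi] is a genuine orbit, a time change [g] whose orbit stays [eps1]-close to [xi]
   therefore cannot drift from the identity by [dl]: at a time where the drift [g t - t]
   equals [+-dl] (intermediate value theorem), two points of one orbit at time distance
   [dl] would be closer than [c].  As [xi] is an orbit between consecutive multiples of
   [T0], [g t - t] oscillates by at most [2 dl] over any interval of length [T0].  The
   McShane minorant of [g t - t], linearly corrected at the endpoints [0] and [T1], is a
   [4 dl / T0]-Lipschitz perturbation [D] of it, so [t + g 0 + D t] lies in [Rep(eps)] and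
   stays within time [2 dl] of [g], hence within distance [eps] of [xi] by uniform
   continuity of the flow. *)

From HB Require Import structures.
From mathcomp Require Import all_boot all_order all_algebra.
From mathcomp Require Import all_classical all_reals all_analysis.
From mathcomp Require Import ring lra.
Set Implicit Arguments. Unset Strict Implicit. Unset Printing Implicit Defensive.
Import Order.TTheory GRing.Theory Num.Theory Num.Def.
Import numFieldTopology.Exports.
Local Open Scope classical_set_scope.
Local Open Scope ring_scope.

Section RealReparametrizations.
Variable R : realType.
Implicit Types (f D G : R -> R).

Lemma lipschitz_continuous f (C : R) : 0 <= C ->
  (forall x y, `|f x - f y| <= C * `|x - y|) -> continuous f.
Proof.
move=> C0 fC x; apply/cvgrPdist_lt => e e0.
apply/nbhs_ballP; exists (e / (C + 1)) => [|t]; first by rewrite /= divr_gt0 // ltr_wpDl.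
rewrite /ball /= ltr_pdivlMr ?ltr_wpDl // => xt.
apply: le_lt_trans (fC x t) _; have := normr_ge0 (x - t); nra.
Qed.

Lemma is_Rep_bilipschitz f (m C : R) : 0 < m ->
  (forall a b, b <= a -> m * (a - b) <= f a - f b <= C * (a - b)) -> is_Rep f.
Proof.
move=> m0 fmC.
have lip x y : m * `|x - y| <= `|f x - f y| <= C * `|x - y|.
  wlog yx : x y / y <= x.
    move=> hw; have [|/ltW xy] := leP y x; first exact: hw.
    by rewrite [`|x - y|]distrC [`|f x - f y|]distrC; exact: hw.
  have /andP[h1 h2] := fmC x y yx.
  have mxy : 0 <= m * (x - y) by rewrite mulr_ge0 ?subr_ge0 // ltW.
  by rewrite !ger0_norm ?subr_ge0 //; lra.
have C0 : 0 <= C by have := fmC 1 0 ler01; rewrite subr0 mulr1; lra.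
have inc a b : a < b -> f a < f b.
  move=> ab; have := fmC b a (ltW ab); have : 0 < m * (b - a) by rewrite mulr_gt0 ?subr_gt0.
  lra.
have finj : injective f.
  by move=> a b fab; case: (ltgtP a b) => // /inc; rewrite fab ltxx.
have cf : continuous f by apply: (lipschitz_continuous C0) => x y; case/andP: (lip x y).
have surj y : exists x, f x = y.
  pose A := `|y - f 0| / m.
  have A0 : 0 <= A by rewrite divr_ge0 // ltW.
  have mA : m * A = `|y - f 0| by rewrite mulrC divfK ?gt_eqF.
  have /andP[fA _] := fmC A 0 A0; have /andP[fnA _] := fmC 0 (- A) (ltac:(lra)).
  rewrite subr0 in fA; rewrite sub0r opprK in fnA.
  have /andP[yl yr] : - `|y - f 0| <= y - f 0 <= `|y - f 0| by rewrite -ler_norml.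
  have [x _ fx] : exists2 x, x \in `[- A, A] & f x = y.
    apply: IVT; [lra | exact: continuous_subspaceT |].
    by rewrite ge_min le_max; apply/andP; split; apply/orP; [left|right]; lra.
  by exists x.
have [h fK] := choice surj.
split=> //; exists h; split; first by move=> x; apply: finj; rewrite fK.
split=> //; split=> //.
apply: (@lipschitz_continuous _ m^-1); first by rewrite invr_ge0 ltW.
by move=> x y; rewrite ler_pdivlMl //; have /andP[+ _] := lip (h x) (h y); rewrite !fK.
Qed.

Lemma is_Rep_eps_id_add D (k eps : R) : 0 <= k -> k < 1 -> k < eps ->
  (forall a b, `|D a - D b| <= k * `|a - b|) -> is_Rep_eps eps (fun t => t + D t).
Proof.
move=> k0 k1 keps Dk; split.
  apply: (@is_Rep_bilipschitz _ (1 - k) (1 + k)); first lra.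
  move=> a b ba; have := Dk a b; rewrite (ger0_norm (x := a - b)) ?subr_ge0 // ler_norml; nra.
move=> a b ba; have ab0 : 0 < a - b by rewrite subr_gt0.
have -> : (a + D a - (b + D b)) / (a - b) - 1 = (D a - D b) / (a - b).
  by field; rewrite gt_eqF.
rewrite normrM normfV (gtr0_norm ab0) ltr_pdivrMr //.
by apply: le_lt_trans (Dk a b) _; rewrite (gtr0_norm ab0) ltr_pM2r.
Qed.

Lemma oscillation_linear_bound G (T T1 A : R) : 0 < T -> 0 <= A ->
  (forall a b, 0 <= a -> a <= b -> b <= T1 -> b - a <= T -> `|G b - G a| <= A) ->
  forall s t, 0 <= s <= T1 -> 0 <= t <= T1 -> `|G t - G s| <= A + A / T * `|t - s|.
Proof.
move=> T_gt0 A0 GA.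
have L0 : 0 <= A / T by rewrite divr_ge0 // ltW.
have LT : A / T * T = A by rewrite divfK ?gt_eqF.
suff bound n s t : 0 <= s -> s <= t -> t <= T1 -> t - s <= n%:R * T ->
    `|G t - G s| <= A + A / T * (t - s).
  move=> s t /andP[s0 sT] /andP[t0 tT].
  wlog st : s t s0 sT t0 tT / s <= t.
    move=> hw; have [|/ltW ts] := leP s t; first exact: hw.
    by rewrite distrC [`|t - s|]distrC; exact: hw.
  have [n tsn] : exists n : nat, t - s <= n%:R * T.
    exists (archi_bound ((t - s) / T)); rewrite -ler_pdivrMr //.
    by apply: ltW; apply: archi_boundP; rewrite divr_ge0 ?subr_ge0 // ltW.
  by rewrite [`|t - s|]ger0_norm ?subr_ge0 //; exact: (bound n).
elim: n s t => [|n IH] s t s0 st tT.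
  rewrite mul0r subr_le0 => ts; have -> : t = s by apply/le_anti; rewrite ts st.
  by rewrite !subrr normr0 mulr0 addr0.
move=> tsn; have [tsT|Tts] := leP (t - s) T.
  have : 0 <= A / T * (t - s) by rewrite mulr_ge0 ?subr_ge0.
  by have := GA s t s0 st tT tsT; lra.
have h1 := GA s (s + T) s0 (ltac:(lra)) (ltac:(lra)) (ltac:(lra)).
have h2 := IH (s + T) t (ltac:(lra)) (ltac:(lra)) tT
  (ltac:(rewrite -natr1 mulrDl mul1r in tsn; lra)).
have := ler_distD (G (s + T)) (G t) (G s); lra.
Qed.

Lemma lipschitz_minorant G (T1 A L : R) : 0 <= T1 -> 0 <= L ->
  (forall s t, 0 <= s <= T1 -> 0 <= t <= T1 -> `|G t - G s| <= A + L * `|t - s|) ->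
  exists D, (forall a b, `|D a - D b| <= L * `|a - b|) /\
    forall t, 0 <= t <= T1 -> G t - A <= D t <= G t.
Proof.
move=> T1_0 L0 GAL.
have dom0 : (0:R) <= 0 <= T1 by rewrite lexx.
(* McShane: the infimum of the cones [G s + L |t - s|] over the sample points s *)
pose S t := [set G s + L * `|t - s| | s in [set s | 0 <= s <= T1]].
have Sne t : S t !=set0 by exists (G 0 + L * `|t - 0|), 0.
have Slb t : has_lbound (S t).
  exists (G 0 - A - L * `|t|) => _ [s hs <-].
  have := GAL 0 s dom0 hs; rewrite subr0 ler_norml => /andP[+ _].
  have := ler_wpM2l L0 (ler_distD t s 0); rewrite !subr0 [`|s - t|]distrC; lra.
exists (fun t => inf (S t)); split.
  suff half a b : inf (S a) - inf (S b) <= L * `|a - b|.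
    by move=> a b; rewrite ler_norml half andbT; have := half b a; rewrite distrC; lra.
  suff : inf (S a) - L * `|a - b| <= inf (S b) by lra.
  apply: lb_le_inf => // _ [s hs <-].
  have := ge_inf (Slb a) (ex_intro2 _ _ s hs erefl).
  have := ler_wpM2l L0 (ler_distD b a s); lra.
move=> t ht; apply/andP; split.
  apply: lb_le_inf => // _ [s hs <-].
  by have := GAL s t hs ht; rewrite ler_norml distrC => /andP[_]; lra.
by apply: ge_inf => //; exists t => //; rewrite subrr normr0 mulr0 addr0.
Qed.

Lemma lipschitz_approx_endpoints G (T1 A L : R) : 0 < T1 -> 0 <= L -> A <= L * T1 ->
  G 0 = 0 ->
  (forall s t, 0 <= s <= T1 -> 0 <= t <= T1 -> `|G t - G s| <= A + L * `|t - s|) ->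
  exists D, [/\ D 0 = 0, D T1 = G T1,
    forall a b, `|D a - D b| <= 2 * L * `|a - b| &
    forall t, 0 <= t <= T1 -> `|D t - G t| <= A].
Proof.
move=> T1_0 L0 ALT G0 GAL.
have [D0 [D0L D0G]] := lipschitz_minorant (ltW T1_0) L0 GAL.
have /andP[D0G0 D0G0'] : G 0 - A <= D0 0 <= G 0 by apply: D0G; rewrite lexx ltW.
have /andP[D0T1 D0T1'] : G T1 - A <= D0 T1 <= G T1 by apply: D0G; rewrite lexx ltW.
rewrite G0 in D0G0 D0G0'.
(* linear correction making the endpoint values exact; its slope is at most [L] *)
pose be := (G T1 - D0 T1 + D0 0) / T1.
have beT1 : be * T1 = G T1 - D0 T1 + D0 0 by rewrite divfK ?gt_eqF.
have beL : `|be| <= L.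
  rewrite -(ler_pM2r T1_0) -(gtr0_norm T1_0) -normrM (gtr0_norm T1_0) beT1 ler_norml.
  by apply/andP; split; lra.
exists (fun t => D0 t - D0 0 + be * t); split.
- by rewrite mulr0 subrr addr0.
- by rewrite beT1; lra.
- move=> a b; rewrite (_ : _ - _ = (D0 a - D0 b) + be * (a - b)); last by ring.
  apply: le_trans (ler_normD _ _) _; rewrite normrM.
  by have := D0L a b; have := ler_wpM2r (normr_ge0 (a - b)) beL; lra.
move=> t /[dup] ht /andP[t0 tT1]; have /andP[D0Gt D0Gt'] := D0G t ht.
have lam0 : 0 <= t / T1 by rewrite divr_ge0 // ltW.
have lam1 : t / T1 <= 1 by rewrite ler_pdivrMr // mul1r.
set lam := t / T1 in lam0 lam1.
have -> : be * t = (G T1 - D0 T1) * lam + D0 0 * lam.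
  by rewrite /lam -mulrDl -beT1; field; rewrite gt_eqF.
have h0 : 0 <= - D0 0 * (1 - lam) <= A * (1 - lam).
  by apply/andP; split; [apply: mulr_ge0 | apply: ler_wpM2r]; lra.
have h1 : 0 <= (G T1 - D0 T1) * lam <= A * lam.
  by apply/andP; split; [apply: mulr_ge0 | apply: ler_wpM2r]; lra.
rewrite ler_norml; apply/andP; split; lra.
Qed.

Lemma Rep_eps_approximation (g : R -> R) (T0 T1 dl eps : R) :
  0 < T0 -> T0 <= T1 -> 0 <= dl -> 4 * dl < T0 -> 4 * dl < eps * T0 ->
  (forall a b, 0 <= a -> a <= b -> b <= T1 -> b - a <= T0 ->
     `|(g b - b) - (g a - a)| <= 2 * dl) ->
  exists gt, [/\ is_Rep_eps eps gt, gt 0 = g 0, gt T1 = g T1 &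
    forall t, 0 <= t <= T1 -> `|gt t - g t| <= 2 * dl].
Proof.
move=> T0_0 T0T1 dl0 dlT0 dleps drift.
pose L := 2 * dl / T0.
have L0 : 0 <= L by rewrite divr_ge0 ?mulr_ge0 // ltW.
have LT0 : L * T0 = 2 * dl by rewrite divfK ?gt_eqF.
pose G t := g t - g 0 - t.
have driftG a b : 0 <= a -> a <= b -> b <= T1 -> b - a <= T0 -> `|G b - G a| <= 2 * dl.
  move=> a0 ab bT1 baT0; rewrite /G (_ : _ - _ = g b - b - (g a - a)); last by ring.
  exact: drift.
have osc := oscillation_linear_bound T0_0 (ltac:(lra) : 0 <= 2 * dl) driftG.
rewrite -/L in osc.
have T1_0 : 0 < T1 by lra.
have ALT1 : 2 * dl <= L * T1 by rewrite -LT0 ler_wpM2l.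
have G0 : G 0 = 0 by rewrite /G subrr subr0.
have [D [D0 DT1 DL Dg]] := lipschitz_approx_endpoints T1_0 L0 ALT1 G0 osc.
exists (fun t => t + (g 0 + D t)); split.
- apply: (@is_Rep_eps_id_add _ (2 * L)) => [||| a b].
  + by rewrite mulr_ge0.
  + by rewrite -(ltr_pM2r T0_0) -mulrA LT0 mul1r; lra.
  + by rewrite -(ltr_pM2r T0_0) -mulrA LT0; lra.
  + by rewrite opprD addrACA subrr add0r; exact: DL.
- by rewrite D0 addr0 add0r.
- by rewrite DT1 /G; ring.
move=> t ht; rewrite (_ : _ - _ = D t - G t); first exact: Dg.
by rewrite /G; ring.
Qed.

End RealReparametrizations.

Lemma compact_fixpoint_free_gap (R : realType) (M : metricType R) (f : M -> M) (K : set M) :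
  continuous f -> compact K -> (forall z, K z -> f z <> z) ->
  exists2 c, 0 < c & forall z, K z -> c <= mdist (f z) z.
Proof.
move=> cf /compact_near_coveringP cov nofix.
pose P c z := c <= mdist (f z) z.
have /cov covP : forall z, K z -> \forall z' \near z & c \near (0:R)^'+, P c z'.
  move=> z Kz; set D := mdist (f z) z.
  have D0 : 0 < D by rewrite mdist_gt0; apply/eqP; exact: nofix.
  have /cvg_ballP/(_ (D / 4)) := cf z.
  case/(_ _)/nbhs_ballP => [|r r0 near_z]; first by rewrite divr_gt0.
  exists (ball z (minr r (D / 4)), [set c | 0 < c < D / 2]).
    split; first by apply: nbhsx_ballx; rewrite lt_min r0 divr_gt0.
    near=> c; apply/andP; split; near: c; [exact: nbhs_right_gt|].
    by apply: nbhs_right_lt; rewrite divr_gt0.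
  case=> z' c /= [zz' /andP[_ cD]].
  have fzz' : mdist (f z) (f z') < D / 4.
    have /near_z : ball z r z' by apply: le_ball zz'; rewrite ge_min lexx.
    by rewrite /= ballEmdist.
  move: zz'; rewrite ballEmdist /= lt_min => /andP[_ zz'].
  have := metric_triangle (f z) (f z') z; have := metric_triangle (f z') z' z.
  by rewrite /P (metric_sym z' z) -/D; lra.
near (0:R)^'+ => c.
have Pc : K `<=` P c by near: c.
by exists c => //; near: c; exact: nbhs_right_gt.
Unshelve. all: by end_near.
Qed.

Lemma unif_continuous_strip (R : realType) (M N : metricType R) (F : R -> M -> N) :
  continuous (fun x : R * M => F x.1 x.2) -> compact [set: M] ->
  forall eta, 0 < eta -> exists2 rho, 0 < rho & forall s s' p q, `|s| <= 1 ->
    `|s - s'| < rho -> mdist p q < rho -> mdist (F s p) (F s' q) < eta.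
Proof.
move=> cF cM eta eta0.
have /compact_near_coveringP cov : compact ((`[-1, 1]%classic : set R) `*` [set: M]).
  by apply: compact_setX => //; exact: segment_compact.
pose P rho (x : R * M) := forall s' q, `|x.1 - s'| < rho -> mdist x.2 q < rho ->
  mdist (F x.1 x.2) (F s' q) < eta.
have /cov covP : forall x, ((`[-1, 1]%classic : set R) `*` [set: M]) x ->
    \forall x' \near x & rho \near (0:R)^'+, P rho x'.
  case=> s p _; have /cvg_ballP/(_ (eta / 2)) := cF (s, p).
  case/(_ _)/nbhs_ballP => [|r r0 near_sp]; first by rewrite divr_gt0.
  have close s1 p1 : `|s - s1| < r -> mdist p p1 < r -> mdist (F s p) (F s1 p1) < eta / 2.
    by move=> h1 h2; have := near_sp (s1, p1) (conj h1 _); rewrite !ballEmdist; apply.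
  exists (ball (s, p) (r / 2), [set i | 0 < i < r / 2]).
    split; first by apply: nbhsx_ballx; rewrite divr_gt0.
    near=> i; apply/andP; split; near: i; [exact: nbhs_right_gt|].
    by apply: nbhs_right_lt; rewrite divr_gt0.
  case=> -[s1 p1] i /= [[h1 h2] /andP[i0 ir]] s' q hs hq.
  rewrite ballEmdist /= in h2; rewrite /ball /= in h1.
  have e1 := close s1 p1 (ltac:(lra)) (ltac:(lra)).
  have e2 : mdist (F s p) (F s' q) < eta / 2.
    apply: close.
      by apply: le_lt_trans (ler_distD s1 _ _) _; lra.
    by apply: le_lt_trans (metric_triangle _ p1 _) _; lra.
  by apply: le_lt_trans (metric_triangle _ (F s p) _) _; rewrite metric_sym; lra.
near (0:R)^'+ => rho.
have Prho : ((`[-1, 1]%classic : set R) `*` [set: M]) `<=` P rho by near: rho.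
exists rho => [|s s' p q hs]; first by near: rho; exact: nbhs_right_gt.
by apply: (Prho (s, p)); split => //=; rewrite in_itv /= -ler_norml.
Unshelve. all: by end_near.
Qed.

Section Flows.
Variables (R : realType) (M : metricType R) (phi : R -> M -> M).
Hypothesis phiD : forall s t x, phi (s + t) x = phi s (phi t x).

Lemma bigcap_flow_image (K : set M) (T r : R) (w : M) :
  (forall x, phi 0 x = x) ->
  (\bigcap_(t in [set t : R | - T <= t <= T]) (phi t @` K)) w ->
  - T <= r <= T -> K (phi r w).
Proof.
move=> phi0 Kw /andP[rT rT']; have [k Kk <-] := Kw (- r) (ltac:(apply/andP; split; lra)).
by rewrite -phiD addrN phi0.
Qed.

Lemma in_P_split (T0 : R) (xi : R -> M) (u : R) : 0 < T0 -> in_P phi T0 xi ->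
  exists2 v, u < v <= u + T0 &
    (forall s, 0 <= s -> u + s < v -> xi (u + s) = phi s (xi u)) /\
    (forall s, 0 <= s -> s < T0 -> xi (v + s) = phi s (xi v)).
Proof.
move=> T0_0 xiP; pose n := Num.floor (u / T0).
have /andP[nu un] := floor_itv (u / T0); rewrite -/n in nu un.
rewrite ler_pdivlMr // in nu; rewrite ltr_pdivrMr // in un.
rewrite intrD mulrDl mul1r in un; set b := n%:~R * T0 in nu un.
exists (b + T0); first by apply/andP; split; lra.
have -> : b + T0 = (n + 1)%:~R * T0 by rewrite intrD mulrDl mul1r.
split=> s s0 sT; last by rewrite addrC xiP.
have xiu : xi u = phi (u - b) (xi b) by rewrite -xiP ?subrK ?subr_ge0 //; lra.
rewrite xiu -phiD -xiP; first by rewrite /b -addrA subrK addrC.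
  lra.
by rewrite intrD mulrDl mul1r -/b in sT; lra.
Qed.

Lemma drift_le_of_gap (K : set M) (dl c L : R) (w : M) (u : R -> R) :
  (forall z, K z -> c <= mdist (phi dl z) z) -> 0 <= dl ->
  (forall r, - dl <= r <= L -> K (phi r w)) ->
  continuous u -> u 0 = 0 ->
  (forall s, 0 <= s -> s < L -> mdist (phi (u s) w) (phi s w) < c) ->
  forall s, 0 <= s <= L -> `|u s - s| <= dl.
Proof.
move=> gap dl0 Kw cu u0 close s /andP[s0 sL]; rewrite leNgt; apply/negP => drift.
pose f t := u t - t.
have cf : continuous f by move=> t; apply: cvgB; [exact: cu | exact: cvg_id].
(* by the IVT the drift is [dl] or [- dl] at some [s2 < s]; [gap] at the orbit point
   there contradicts [close] *)
have [v vdl fv] : exists2 v, `|v| = dl & Num.min (f 0) (f s) <= v <= Num.max (f 0) (f s).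
  rewrite /f u0 subrr; move: drift; rewrite ltr_normr => /orP[] ?.
  - by exists dl; [rewrite ger0_norm | rewrite ge_min le_max; apply/andP; split; apply/orP; lra].
  - by exists (- dl); [rewrite normrN ger0_norm |
                     rewrite ge_min le_max; apply/andP; split; apply/orP; lra].
have cfs : {within `[0, s], continuous f} by exact: continuous_subspaceT.
have [s2] := IVT s0 cfs fv.
rewrite in_itv /= => /andP[s20 s2s] fs2.
have s2L : s2 < L.
  suff : s2 != s by rewrite neq_lt => /orP[]; lra.
  by apply/eqP => e; move: drift; rewrite -/(f s) -e fs2 vdl ltxx.
have [us2 | us2] : u s2 = s2 + dl \/ u s2 = s2 - dl.
  by move: vdl; rewrite -fs2 /f; case: ger0P => _ <-; [left | right]; ring.
- have := gap (phi s2 w) (Kw s2 (ltac:(apply/andP; split; lra))).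
  by rewrite -phiD addrC -us2; have := close s2 s20 s2L; lra.
- have := gap (phi (s2 - dl) w) (Kw (s2 - dl) (ltac:(apply/andP; split; lra))).
  rewrite -phiD addrC subrK -us2 metric_sym.
  by have := close s2 s20 s2L; lra.
Qed.

Lemma window_drift (K : set M) (dl c rho : R) (xi : R -> M) (g : R -> R) (y : M)
    (a b : R) :
  (forall z, K z -> c <= mdist (phi dl z) z) -> 0 <= dl ->
  (forall s s' p q, `|s| <= 1 -> `|s - s'| < rho -> mdist p q < rho ->
     mdist (phi s p) (phi s' q) < c / 2) ->
  continuous g -> a <= b -> b - a <= 1 ->
  (forall t, a <= t <= b -> mdist (xi t) (phi (g t) y) < minr rho (c / 2)) ->
  (forall r, - dl <= r <= b - a -> K (phi r (phi (g a) y))) ->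
  (forall s, 0 <= s -> s < b - a -> xi (a + s) = phi s (xi a)) ->
  `|(g b - b) - (g a - a)| <= dl.
Proof.
move=> gap dl0 equi cg ab ba1 close Kw orbit.
have cu : continuous (fun s => g (a + s) - g a).
  move=> s; apply: cvgB; last exact: cvg_cst.
  by apply: continuous_comp; [apply: cvgD; [exact: cvg_cst | exact: cvg_id] | exact: cg].
have := @drift_le_of_gap K dl c (b - a) (phi (g a) y) _ gap dl0 Kw cu _ _ (b - a).
rewrite subrKC (_ : g b - b - _ = g b - g a - (b - a)); last by ring.
apply; [by rewrite addr0 subrr | | by apply/andP; split; lra].
move=> s s0 sba; rewrite -phiD subrK.
have := close (a + s) (ltac:(apply/andP; split; lra)).
rewrite orbit // lt_min metric_sym => /andP[_ close_s].
have /close : a <= a <= b by rewrite lexx.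
rewrite lt_min => /andP[close_a _].
have rho0 : 0 < rho := le_lt_trans (mdist_ge0 _ _) close_a.
have := equi s s _ _ (ltac:(rewrite ger0_norm //; lra)) (ltac:(by rewrite subrr normr0)) close_a.
have := metric_triangle (phi (g (a + s)) y) (phi s (xi a)) (phi s (phi (g a) y)).
lra.
Qed.

Lemma reparam_drift_bound (K : set M) (T0 dl : R) :
  continuous (fun x : R * M => phi x.1 x.2) -> compact [set: M] -> compact K ->
  0 < T0 <= 1 -> 0 <= dl -> (forall x, K x -> phi dl x <> x) ->
  exists2 eps1, 0 < eps1 & forall (xi : R -> M) (t0 T1 : R) (g : R -> R) (y : M),
    in_P phi T0 xi -> continuous g ->
    (forall t, 0 <= t <= T1 -> mdist (xi (t + t0)) (phi (g t) y) < eps1) ->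
    (forall t r, 0 <= t <= T1 -> - dl <= r <= T0 -> K (phi r (phi (g t) y))) ->
    forall a b, 0 <= a -> a <= b -> b <= T1 -> b - a <= T0 ->
      `|(g b - b) - (g a - a)| <= 2 * dl.
Proof.
move=> cphi cM cK /andP[T0_0 T0_1] dl0 nofix.
have cphi_dl : continuous (phi dl).
  move=> x; apply: (@continuous2_cvg _ _ _ _ _ _ (fun=> dl) id phi dl x (cphi (dl, x))).
    exact: cvg_cst.
  exact: cvg_id.
have [c c0 gap] := compact_fixpoint_free_gap cphi_dl cK nofix.
have [rho rho0 equi] := unif_continuous_strip cphi cM (ltac:(lra) : 0 < c / 2).
exists (minr rho (c / 2)) => [|xi t0 T1 g y xiP cg close inK a b a0 ab bT1 baT0].
  by rewrite lt_min rho0 /=; lra.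
pose xs t := xi (t + t0).
have window a' b' : 0 <= a' -> a' <= b' -> b' <= T1 -> b' - a' <= T0 ->
    (forall s, 0 <= s -> s < b' - a' -> xs (a' + s) = phi s (xs a')) ->
    `|(g b' - b') - (g a' - a')| <= dl.
  move=> a0' ab' bT1' baT0'; apply: (window_drift gap dl0 equi cg ab') => [|t ht|r hr].
  - lra.
  - by apply: close; apply/andP; split; lra.
  - by apply: inK; apply/andP; split; lra.
(* cut [[a, b]] where [t + t0] crosses the next multiple [v] of [T0]: [xi] may jump there *)
have [v /andP[av vaT0] [orbit1 orbit2]] := in_P_split (a + t0) T0_0 xiP.
have [bv|vb] := leP (b + t0) v.
  apply: le_trans (window a b a0 ab bT1 baT0 _) _ => [s s0 sba|]; last lra.
  by rewrite /xs addrAC orbit1 //; lra.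
have := window a (v - t0) a0 (ltac:(lra)) (ltac:(lra)) (ltac:(lra)).
have := window (v - t0) b (ltac:(lra)) (ltac:(lra)) bT1 (ltac:(lra)).
rewrite /xs subrK.
move=> /(_ (fun s s0 sb => ltac:(rewrite addrAC subrK orbit2 //; lra))) h2.
move=> /(_ (fun s s0 sv => ltac:(rewrite addrAC orbit1 //; lra))) h1.
have := ler_normD (g b - b - (g (v - t0) - (v - t0))) (g (v - t0) - (v - t0) - (g a - a)).
by rewrite addrA subrK; lra.
Qed.

Lemma flow_near_id : (forall x, phi 0 x = x) ->
  continuous (fun x : R * M => phi x.1 x.2) -> compact [set: M] ->
  forall eta, 0 < eta -> exists2 rho, 0 < rho &
    forall d p, `|d| < rho -> mdist p (phi d p) < eta.
Proof.
move=> phi0 cphi cM eta eta0; have [rho rho0 unif] := unif_continuous_strip cphi cM eta0.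
exists rho => // d p hd; rewrite -{1}(phi0 p).
by apply: unif; rewrite ?normr0 ?sub0r ?normrN ?mdistxx.
Qed.

End Flows.

Theorem proposition2p1 (R : realType) (M : metricType R) (phi : R -> M -> M)
  (K : set M) (T0 : R) :
  is_flow phi ->
  compact [set: M] ->
  compact K ->
  K `<=` ~` Sing phi ->
  0 < T0 -> T0 < 1 ->
  (forall t x, 0 < t -> t <= 2 * T0 -> K x -> phi t x <> x) ->
  let Kt := \bigcap_(t in [set t : R | - (2 * T0) <= t <= 2 * T0]) (phi t @` K) in
  forall eps : R, 0 < eps ->
  exists eps1 : R, 0 < eps1 /\
    forall (xi : R -> M) (t0 T1 : R) (g : R -> R) (y : M),
      in_P phi T0 xi -> T0 <= T1 -> is_Rep g -> g 0 = 0 ->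
      (forall t, 0 <= t <= T1 ->
         mdist (xi (t + t0)) (phi (g t) y) < eps1 /\
         Kt (xi (t + t0)) /\ Kt (phi (g t) y)) ->
      exists gt : R -> R,
        is_Rep_eps eps gt /\ gt 0 = g 0 /\ gt T1 = g T1 /\
        (forall t, 0 <= t <= T1 -> mdist (xi (t + t0)) (phi (gt t) y) < eps).
Proof.
move=> [cphi [phi0 phiD]] cM cK _ T0_0 T0_1 nofix Kt eps eps0.
have [rho rho0 near_id] := flow_near_id phi0 cphi cM (ltac:(lra) : 0 < eps / 2).
(* [4 dl < T0] and [4 dl < eps T0] make [Rep_eps_approximation] apply; [2 dl < rho] then
   bounds the time shift between [g] and its replacement *)
pose dl := minr (minr T0 (eps * T0)) rho / 8.
have dl0 : 0 < dl by rewrite divr_gt0 // !lt_min T0_0 mulr_gt0.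
have [dlT0 dleps dlrho] : [/\ dl <= T0 / 8, dl <= eps * T0 / 8 & dl <= rho / 8].
  by rewrite /dl !ler_pM2r ?invr_gt0 // !ge_min !lexx ?orbT.
have T0_01 : 0 < T0 <= 1 by apply/andP; split; lra.
have nofix_dl x : K x -> phi dl x <> x by apply: nofix; lra.
have [eps1 eps1_0 drift] := reparam_drift_bound phiD cphi cM cK T0_01 (ltW dl0) nofix_dl.
exists (minr eps1 (eps / 2)); split => [|xi t0 T1 g y xiP T0T1 gRep _ close].
  by rewrite lt_min eps1_0 /=; lra.
have [[_ [_ [_ [cg _]]]] _] := gRep.
have inK t r : 0 <= t <= T1 -> - dl <= r <= T0 -> K (phi r (phi (g t) y)).
  move=> /close[_ [_ Kgt]] /andP[rl rr].
  by apply: (bigcap_flow_image phiD phi0 Kgt); apply/andP; split; lra.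
have close1 t : 0 <= t <= T1 -> mdist (xi (t + t0)) (phi (g t) y) < eps1.
  by move=> /close[+ _]; rewrite lt_min => /andP[].
have [gt [gtRep gt0 gtT1 gt_g]] : exists gt, [/\ is_Rep_eps eps gt, gt 0 = g 0,
    gt T1 = g T1 & forall t, 0 <= t <= T1 -> `|gt t - g t| <= 2 * dl].
  by apply: Rep_eps_approximation (drift xi t0 T1 g y xiP cg close1 inK); lra.
exists gt; split=> //; split=> //; split=> // t ht.
have [+ _] := close t ht; rewrite lt_min => /andP[_ close_t].
have shift_t : mdist (phi (g t) y) (phi (gt t) y) < eps / 2.
  rewrite -(subrK (g t) (gt t)) phiD; apply: near_id.
  by have := gt_g t ht; lra.
have := metric_triangle (xi (t + t0)) (phi (g t) y) (phi (gt t) y).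
lra.
Qed.
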